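(* Let $\Bbbk$ be a field, $q\in\Bbbk$ a primitive $n$-th root of unity and $k,\ell,t\in\mathbb{N}_0$ with $k,\ell,t<n$. Then: (i) if $n\le t+\ell$, then for each $0\le m<t$, $$\sum_{s=0}^{m}(-1)^sq^{\frac{s(s+1)}{2}-sm}\binom{t}{m-s}_q\binom{s}{t+\ell-n}_q=(-1)^mq^{-\frac{m(m-1)}{2}-t(t+\ell-m)}\binom{m-t+n}{\ell}_q;$$ (ii) if $\ell\le k$, then $\sum_{s=0}^{\ell}(-1)^sq^{\frac{s(s+1)}{2}-s(\ell-k)}\binom{n+\ell-k}{s}_q=\binom{k}{\ell}_q$; (iii) if $\ell\le k$, then for each $\ell\le m<n$, $$\sum_{s=0}^{m}(-1)^sq^{\frac{s(s+1)}{2}-s(\ell-k)}\binom{n+m-k}{s}_q\binom{n+m-s}{n+\ell-s}_q=\binom{k}{\ell}_q.$$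
   Context: $q$-binomials: for integers $N\ge0$ and $m$, $\binom{0}{0}_q=1$, $\binom{N}{m}_q=0$ if $m>N$ or $m<0$, and for $N\ge1$, $0\le m\le N$, $\binom{N}{m}_q=\binom{N-1}{m-1}_q+q^m\binom{N-1}{m}_q$. *)

From mathcomp Require Import all_boot all_order all_algebra.
Set Implicit Arguments. Unset Strict Implicit. Unset Printing Implicit Defensive.
Import Order.TTheory GRing.Theory Num.Theory.
Local Open Scope ring_scope.

(* For m > N the recursion also yields 0. *)
Fixpoint qbinom (R : ringType) (q : R) (N m : nat) {struct N} : R :=
  match N, m with
  | 0%N, 0%N => 1
  | 0%N, _.+1 => 0
  | N'.+1, 0%N => qbinom q N' 0
  | N'.+1, m'.+1 => qbinom q N' m' + q ^+ m * qbinom q N' m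
  end.

From mathcomp Require Import all_boot all_order all_algebra zify ring.
Set Implicit Arguments. Unset Strict Implicit. Unset Printing Implicit Defensive.
Import Order.TTheory GRing.Theory Num.Theory.

(* Each sum is a coefficient of a product of two power series in T: a finite
   q-Pochhammer product prod_(i < N) (1 - q^i x T), whose coefficients are
   signed q-binomials, times the inverse of such a product, whose coefficients
   are q-binomials again.  When the two products share their top or their
   bottom factor, that factor cancels, and iterating leaves one product, i.e.
   one q-binomial.  For a primitive n-th root of unity q the relation q^n = 1
   makes the factors of (iii) cancel from the top and those of (i) from the
   bottom; the q-Lucas property [n + a, b] = [a, b] and the reflection formula
   relating [n - 1 - j, l] to [j + l, l] then give the stated right-hand sides.
   Part (ii) is part (iii) for m = l. *)

Lemma bin2D a b : 'C(a + b, 2) = 'C(a, 2) + a * b + 'C(b, 2).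
Proof. by elim: a => // a IH; rewrite addSn !binS !bin1 IH; lia. Qed.

Lemma bin2_double n : 'C(n, 2) + 'C(n, 2) + n = n * n.
Proof. by elim: n => // n IH; rewrite binS bin1; lia. Qed.

Local Open Scope ring_scope.

Section QBinomialRing.
Variables (R : nzRingType) (q : R).

Lemma qbinom_small N m : (N < m)%N -> qbinom q N m = 0.
Proof.
elim: N m => [|N IH] [|m] //= ltNm.
by rewrite !IH ?mulr0 ?addr0 // ltnW.
Qed.

Lemma qbinom0 N : qbinom q N 0 = 1.
Proof. by elim: N. Qed.

Lemma qbinomn N : qbinom q N N = 1.
Proof. by elim: N => //= N ->; rewrite qbinom_small ?mulr0 ?addr0. Qed.

Lemma qbinomS N m :
  qbinom q N.+1 m.+1 = qbinom q N m + q ^+ m.+1 * qbinom q N m.+1.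
Proof. by []. Qed.

End QBinomialRing.

Section QBinomialComRing.
Variables (R : comNzRingType) (q : R).

Lemma qbinomSr N m :
  qbinom q N.+1 m.+1 = qbinom q N m.+1 + q ^+ (N - m) * qbinom q N m.
Proof.
elim: N m => [|N IH] [|m].
- by rewrite /= mulr0 addr0 add0r mulr1.
- by rewrite /= !mulr0 !addr0.
- rewrite [LHS]qbinomS [in LHS]IH [in RHS]qbinomS !qbinom0 !subn0 expr1.
  by rewrite [q ^+ N.+1]exprS; ring.
have [|ltmN] := leqP N m.
  rewrite leq_eqVlt => /orP[/eqP <- | ltNm].
    by rewrite subnn !qbinomn qbinom_small // expr0 mul1r add0r.
  by rewrite !qbinom_small ?mulr0 ?addr0 // ltnW.
have R1 := IH m; have R2 := IH m.+1; rewrite qbinomS in R1; rewrite qbinomS in R2.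
rewrite !qbinomS subSS.
have Nm : (N - m = (N - m.+1).+1)%N by lia.
rewrite Nm in R1 *; move: (N - m.+1)%N R1 R2 => a R1 R2.
set b0 := qbinom q N m in R1 R2 *; set b1 := qbinom q N m.+1 in R1 R2 *.
set b2 := qbinom q N m.+2 in R1 R2 *.
transitivity (b1 + q ^+ m.+2 * b2 + q ^+ a.+1 * (b0 + q ^+ m.+1 * b1)
  + (b0 + q ^+ m.+1 * b1 - (b1 + q ^+ a.+1 * b0))
  + q ^+ m.+2 * (b1 + q ^+ m.+2 * b2 - (b2 + q ^+ a * b1))).
  by rewrite [q ^+ m.+2]exprS [q ^+ a.+1]exprS; ring.
by rewrite R1 R2 !subrr mulr0 !addr0.
Qed.

Lemma mul_qbinom_left N m :
  (1 - q ^+ m.+1) * qbinom q N m.+1 = (1 - q ^+ (N - m)) * qbinom q N m.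
Proof.
have E := qbinomSr N m; rewrite qbinomS in E.
apply/eqP; rewrite -subr_eq0 -[0](subrr (qbinom q N m + q ^+ m.+1 * qbinom q N m.+1)).
by rewrite {1}E; apply/eqP; ring.
Qed.

Lemma mul_qbinom_diag N m :
  (1 - q ^+ N.+1) * qbinom q N m = (1 - q ^+ m.+1) * qbinom q N.+1 m.+1.
Proof.
have [ltNm | lemN] := ltnP N m; first by rewrite !qbinom_small ?mulr0.
have qNm : q ^+ N.+1 = q ^+ m.+1 * q ^+ (N - m).
  by rewrite -exprD addSn subnKC.
rewrite [RHS]mulrBl mul1r {1}qbinomS qbinomSr qNm; ring.
Qed.

Lemma qbinom_sub N m : (m <= N)%N -> qbinom q N (N - m) = qbinom q N m.
Proof.
elim: N m => [|N IH] [|m] //; first by rewrite subn0 qbinomn qbinom0.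
rewrite subSS ltnS leq_eqVlt => /orP[/eqP-> | ltmN].
  by rewrite subnn qbinom0 qbinomn.
by rewrite -(subnSK ltmN) qbinomS subnSK // !IH ?(ltnW ltmN) // qbinomSr.
Qed.

End QBinomialComRing.

Section Convolution.
Variable R : comPzRingType.

Definition conv (a b : nat -> R) l := \sum_(0 <= s < l.+1) a s * b (l - s)%N.

(* [mul1BX y a] is the coefficient sequence of (1 - y T) * A, where a is that
   of the power series A. *)
Definition mul1BX (y : R) (a : nat -> R) s :=
  a s - (if s is s'.+1 then y * a s' else 0).

Lemma eq_conv a a' b b' : a =1 a' -> b =1 b' -> conv a b =1 conv a' b'.
Proof. by move=> eq_a eq_b l; apply: eq_bigr => s _; rewrite eq_a eq_b. Qed.

Lemma conv_mul1BX y a b : conv (mul1BX y a) b =1 conv a (mul1BX y b).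
Proof.
move=> l; rewrite /conv /mul1BX.
rewrite (eq_bigr _ (fun s _ => mulrBl _ _ _)) (eq_bigr _ (fun s _ => mulrBr _ _ _)).
rewrite !sumrB; congr (_ - _).
case: l => [|l]; first by rewrite !big_nat1 mul0r mulr0.
rewrite big_nat_recl // [RHS]big_nat_recr //= subnn mul0r mulr0 add0r addr0.
apply: eq_big_nat => s /andP[_ lt_sl].
by rewrite subSS subSn // mulrCA mulrA.
Qed.

End Convolution.

Section QPochhammerCoefficients.
Variables (R : comNzRingType) (q : R).

(* The coefficients of T^s in prod_(i < N) (1 - q^i x T) and of T^j in
   prod_(i < c) (1 - q^i z T)^-1. *)
Definition qpoch_coef x N s := (-1) ^+ s * q ^+ 'C(s, 2) * x ^+ s * qbinom q N s.

Definition qpoch_inv_coef z c j := z ^+ j * qbinom q (c + j).-1 j.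

Lemma qpoch_coefSr x N :
  qpoch_coef x N.+1 =1 mul1BX (q ^+ N * x) (qpoch_coef x N).
Proof.
rewrite /mul1BX /qpoch_coef => -[|s]; first by rewrite !qbinom0 subr0.
rewrite qbinomSr; have [ltNs | lesN] := ltnP N s.
  by rewrite !qbinom_small ?mulr0 ?addr0 ?subr0 ?mulr0 // leqW.
have qNs : q ^+ 'C(s.+1, 2) * q ^+ (N - s) = q ^+ N * q ^+ 'C(s, 2).
  by rewrite -!exprD binS bin1; congr (_ ^+ _); lia.
transitivity ((-1) ^+ s.+1 * q ^+ 'C(s.+1, 2) * x ^+ s.+1 * qbinom q N s.+1
  + (-1) ^+ s.+1 * x ^+ s.+1 * (q ^+ 'C(s.+1, 2) * q ^+ (N - s)) * qbinom q N s).
  by ring.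
by rewrite qNs !exprS; ring.
Qed.

Lemma qpoch_coefSl x N :
  qpoch_coef x N.+1 =1 mul1BX x (qpoch_coef (q * x) N).
Proof.
rewrite /mul1BX /qpoch_coef => -[|s]; first by rewrite !qbinom0 subr0.
by rewrite qbinomS !exprMn binS bin1 !exprD !exprS; ring.
Qed.

Lemma qpoch_inv_coefSr z c :
  qpoch_inv_coef z c =1 mul1BX (q ^+ c * z) (qpoch_inv_coef z c.+1).
Proof.
rewrite /mul1BX /qpoch_inv_coef => -[|j]; first by rewrite !qbinom0 subr0.
by rewrite !addnS !addSn !succnK qbinomSr addnK exprS; ring.
Qed.

Lemma qpoch_inv_coefSl z c :
  qpoch_inv_coef (q * z) c =1 mul1BX z (qpoch_inv_coef z c.+1).
Proof.
rewrite /mul1BX /qpoch_inv_coef => -[|j]; first by rewrite !qbinom0 subr0.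
by rewrite !addnS !addSn !succnK qbinomS !exprMn !exprS; ring.
Qed.

Lemma conv_qpoch_inv0 x z N :
  conv (qpoch_coef x N) (qpoch_inv_coef z 0) =1 qpoch_coef x N.
Proof.
move=> l; rewrite /conv big_nat_recr //= subnn /qpoch_inv_coef qbinom0 !mulr1.
rewrite big_nat_cond big1 ?add0r // => s /andP[/andP[_ lt_sl] _].
by rewrite qbinom_small ?mulr0 // add0n ltn_predL subn_gt0.
Qed.

Lemma conv_qpoch_cancelr x z c N : q ^+ N * x = q ^+ c * z ->
  conv (qpoch_coef x N.+1) (qpoch_inv_coef z c.+1)
  =1 conv (qpoch_coef x N) (qpoch_inv_coef z c).
Proof.
move=> eq_xz l; rewrite (eq_conv (qpoch_coefSr x N) (frefl _)) conv_mul1BX eq_xz.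
by apply: eq_conv => // j; rewrite qpoch_inv_coefSr.
Qed.

Lemma conv_qpoch_cancell x c N :
  conv (qpoch_coef x N.+1) (qpoch_inv_coef x c.+1)
  =1 conv (qpoch_coef (q * x) N) (qpoch_inv_coef (q * x) c).
Proof.
move=> l; rewrite (eq_conv (qpoch_coefSl x N) (frefl _)) conv_mul1BX.
by apply: eq_conv => // j; rewrite qpoch_inv_coefSl.
Qed.

Lemma conv_qpoch_telescoper x z c d : q ^+ d * x = z ->
  conv (qpoch_coef x (c + d)) (qpoch_inv_coef z c) =1 qpoch_coef x d.
Proof.
move=> eq_xz; elim: c => [|c IH] l; first exact: conv_qpoch_inv0.
by rewrite addSn conv_qpoch_cancelr ?IH // -eq_xz mulrA -exprD addnC.
Qed.

Lemma conv_qpoch_telescopel x c d :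
  conv (qpoch_coef x (c + d)) (qpoch_inv_coef x c) =1 qpoch_coef (q ^+ c * x) d.
Proof.
elim: c x => [|c IH] x l; first by rewrite mul1r; apply: conv_qpoch_inv0.
by rewrite addSn conv_qpoch_cancell IH mulrA -exprSr.
Qed.

End QPochhammerCoefficients.

Lemma exprz_bin2_shift (R : unitRingType) (q : R) s k l : (l <= k)%N ->
  q ^ ((s * s.+1)./2%:Z - s%:Z * (l%:Z - k%:Z)) = q ^+ 'C(s, 2) * q ^+ (k - l).+1 ^+ s.
Proof.
move=> le_lk; rewrite -exprM -exprD exprnP; congr (q ^ _).
have -> : ((s * s.+1)./2 = 'C(s, 2) + s)%N by rewrite mulnC -bin2 binS bin1.
have : (l * s <= k * s)%N by rewrite leq_mul2r le_lk orbT.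
by rewrite mulSn mulnBl; lia.
Qed.

Section UnitExponent.
Variables (R : comUnitRingType) (q : R).
Hypothesis q_unit : q \is a GRing.unit.

Lemma exprz_bin2_rev s u :
  q ^ ((s * s.+1)./2%:Z - (s * (s + u))%:Z) = q ^ (- 'C(s + u, 2)%:Z) * q ^+ 'C(u, 2).
Proof.
rewrite exprnP -exprzDr //; congr (q ^ _).
rewrite mulnC -bin2 binS bin1 bin2D; have := bin2_double s; lia.
Qed.

Lemma qbinom_alt_sum_conv t r m : (r <= m)%N ->
  \sum_(0 <= s < m.+1)
      (-1) ^+ s * q ^ ((s * s.+1)./2%:Z - (s * m)%:Z)
        * qbinom q t (m - s) * qbinom q s r
  = (-1) ^+ m * q ^ (- 'C(m, 2)%:Z)
      * conv (qpoch_coef q 1 t) (qpoch_inv_coef q 1 r.+1) (m - r).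
Proof.
move=> le_rm; set M := (m - r)%N.
rewrite big_nat_rev /= (big_cat_nat (leq0n M.+1)) ?ltnS ?leq_subr //=.
rewrite [X in _ + X]big_nat_cond [X in _ + X]big1 ?addr0; last first.
  move=> u /andP[/andP[lt_Mu le_um] _]; rewrite add0n subSS.
  by rewrite (qbinom_small q (_ : m - u < r)%N) ?mulr0 //; lia.
rewrite /conv mulr_sumr; apply: eq_big_nat => u /andP[_ le_uM].
have le_um : (u <= m)%N by lia.
rewrite add0n subSS subKn // /qpoch_coef /qpoch_inv_coef !expr1n !mulr1 mul1r.
have -> : (r.+1 + (M - u)).-1 = (m - u)%N by lia.
have -> : qbinom q (m - u) (M - u) = qbinom q (m - u) r.
  by rewrite -qbinom_sub; [congr qbinom | ]; lia.
move: (m - u)%N (subnK le_um) => s <-.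
by rewrite exprz_bin2_rev exprD -{1}(signrMK u ((-1) ^+ s)); ring.
Qed.

End UnitExponent.

Section PrimitiveRoot.
Variables (R : idomainType) (n : nat) (q : R).
Hypothesis prim : n.-primitive_root q.

Lemma prim_expr_neq1 i : (0 < i < n)%N -> q ^+ i != 1.
Proof. by case/andP=> i_gt0 lt_in; rewrite -(prim_order_dvd prim) gtnNdvd. Qed.

Lemma prim_root_unit : q \is a GRing.unit.
Proof.
by rewrite -(unitrX_pos _ (prim_order_gt0 prim)) (prim_expr_order prim) unitr1.
Qed.

Lemma qbinom_order_eq0 m : (0 < m < n)%N -> qbinom q n m = 0.
Proof.
case: m => [|m] // lt_mn; have := mul_qbinom_diag q n.-1 m.
rewrite prednK ?(prim_order_gt0 prim) // (prim_expr_order prim) subrr mul0r.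
move/esym/eqP; rewrite mulf_eq0 subr_eq0 eq_sym (negPf (prim_expr_neq1 lt_mn)).
by move/eqP.
Qed.

Lemma qbinom_lucas a b :
  (a < n)%N -> (b < n)%N -> qbinom q (n + a) b = qbinom q a b.
Proof.
elim: a b => [|a IH] [|b] lt_an lt_bn; rewrite ?qbinom0 //.
  by rewrite addn0 qbinom_order_eq0 ?qbinom_small.
by rewrite addnS !qbinomS !IH ?(ltnW lt_an) ?(ltnW lt_bn).
Qed.

(* Since prod_(i < n) (1 - q^i T) = 1 - T^n, the product over j < i < n agrees
   with prod_(i <= j) (1 - q^i T)^-1 below degree n. *)
Lemma qpoch_coef_prim j l :
  (j + l < n)%N -> qpoch_coef q (q ^+ j.+1) (n.-1 - j) l = qbinom q (j + l) l.
Proof.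
elim: l => [|l IH] lt_jln; first by rewrite /qpoch_coef !qbinom0 !mulr1.
rewrite addnS in lt_jln; have IHl := IH (ltnW lt_jln).
have lt_ln : (0 < l.+1 < n)%N by apply/andP; split => //; lia.
have nz : 1 - q ^+ l.+1 != 0 by rewrite subr_eq0 eq_sym; apply: prim_expr_neq1.
apply: (mulfI nz).
rewrite addnS -mul_qbinom_diag -IHl.
set b := (j + l).+1; set N := (n.-1 - j)%N.
have qnb : q ^+ (n - b) * q ^+ b = 1.
  by rewrite -exprD subnK ?(prim_expr_order prim) // ltnW.
have qb : q ^+ l * q ^+ j.+1 = q ^+ b by rewrite -exprD addnS addnC.
rewrite /qpoch_coef.
transitivity (- ((-1) ^+ l * q ^+ 'C(l, 2) * q ^+ j.+1 ^+ l) * (q ^+ l * q ^+ j.+1)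
  * ((1 - q ^+ l.+1) * qbinom q N l.+1)).
  by rewrite binS bin1 exprD [(-1) ^+ l.+1]exprS [q ^+ j.+1 ^+ l.+1]exprS; ring.
rewrite mul_qbinom_left.
have -> : (N - l = n - b)%N by rewrite /N /b; lia.
transitivity (- ((-1) ^+ l * q ^+ 'C(l, 2) * q ^+ j.+1 ^+ l) * qbinom q N l
  * (q ^+ b - q ^+ (n - b) * q ^+ b)); first by rewrite -qb; ring.
by rewrite qnb; ring.
Qed.

Lemma qbinom_lucas_sub a b c : (b <= a)%N -> (c <= a)%N -> (a < n)%N ->
  qbinom q (n + a - c) (n + b - c) = qbinom q (a - c) (a - b).
Proof.
move=> le_ba le_ca lt_an.
have -> : (n + b - c = (n + a - c) - (a - b))%N by lia.
rewrite qbinom_sub -?addnBA ?qbinom_lucas //; lia.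
Qed.

Lemma qbinom_identity_iii k l m :
  (k < n)%N -> (l <= k)%N -> (l <= m)%N -> (m < n)%N ->
  \sum_(0 <= s < m.+1)
      (-1) ^+ s * q ^ ((s * s.+1)./2%:Z - s%:Z * (l%:Z - k%:Z))
        * qbinom q (n + m - k) s * qbinom q (n + m - s) (n + l - s)
  = qbinom q k l.
Proof.
move=> lt_kn le_lk le_lm lt_mn.
have n_gt0 := prim_order_gt0 prim.
set d := (n.-1 - (k - l))%N.
rewrite (big_cat_nat (leq0n l.+1)) //= [X in _ + X]big_nat_cond [X in _ + X]big1.
  rewrite addr0; transitivity (conv (qpoch_coef q (q ^+ (k - l).+1) ((m - l).+1 + d))
                                    (qpoch_inv_coef q 1 (m - l).+1) l).
    apply: eq_big_nat => s /andP[_ lt_sl].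
    rewrite /qpoch_coef /qpoch_inv_coef expr1n mul1r.
    have -> : ((m - l).+1 + d = n + m - k)%N by rewrite /d; lia.
    have -> : ((m - l).+1 + (l - s)).-1 = (m - s)%N by lia.
    rewrite qbinom_lucas_sub; [| lia..].
    have -> : (m - l = m - s - (l - s))%N by lia.
    rewrite qbinom_sub; last by lia.
    by congr (_ * _ * _); rewrite -mulrA exprz_bin2_shift.
  rewrite conv_qpoch_telescoper; last first.
    rewrite -exprD (_ : d + _ = n)%N ?(prim_expr_order prim) //.
    by rewrite /d; lia.
  by rewrite /d qpoch_coef_prim subnK //; lia.
move=> s /andP[/andP[lt_ls le_sm] _].
by rewrite qbinom_lucas_sub ?(qbinom_small q (_ : m - s < m - l)%N) ?mulr0 //; lia.
Qed.

Lemma qbinom_identity_i l t m :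
  (l < n)%N -> (t < n)%N -> (n <= t + l)%N -> (m < t)%N ->
  \sum_(0 <= s < m.+1)
      (-1) ^+ s * q ^ ((s * s.+1)./2%:Z - (s * m)%:Z)
        * qbinom q t (m - s) * qbinom q s (t + l - n)
  = (-1) ^+ m * q ^ (- ((m * m.-1)./2)%:Z - t%:Z * (t%:Z + l%:Z - m%:Z))
      * qbinom q (m + n - t) l.
Proof.
move=> lt_ln lt_tn le_ntl lt_mt; move: (t + l - n)%N (subnKC le_ntl) => r e_tl.
have [lt_mr | le_rm] := ltnP m r.
  rewrite (qbinom_small q (_ : m + n - t < l)%N) ?mulr0; last by lia.
  rewrite big_nat_cond big1 // => s /andP[/andP[_ le_sm] _].
  by rewrite (qbinom_small q (_ : s < r)%N) ?mulr0 //; lia.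
rewrite qbinom_alt_sum_conv ?prim_root_unit //.
rewrite -[X in qpoch_coef q 1 X](subnKC (_ : r.+1 <= t)%N); last by lia.
rewrite conv_qpoch_telescopel mulr1.
move: (m - r)%N (subnKC le_rm) => M e_m.
move: (t - m.+1)%N (subnKC lt_mt) => j e_t.
have refl : qpoch_coef q (q ^+ j.+1) (m + n - t) M = qbinom q (t - r.+1) M.
  have -> : (m + n - t = n.-1 - j)%N by lia.
  have -> : (t - r.+1 = j + M)%N by lia.
  by rewrite qpoch_coef_prim //; lia.
have -> : qbinom q (m + n - t) l = qbinom q (m + n - t) M.
  by rewrite -qbinom_sub; [congr qbinom | ]; lia.
have expo : (- 'C(m, 2)%:Z - t%:Z * (t%:Z + l%:Z - m%:Z)
             = - 'C(m, 2)%:Z + (t * M)%:Z + n%:Z * (- t%:Z))%R.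
  by rewrite -PoszD -e_tl -e_m; lia.
rewrite -bin2 expo !exprzDr ?prim_root_unit // -exprz_exp -(exprnP q n).
rewrite (prim_expr_order prim) exp1rz mulr1 -exprnP {1}/qpoch_coef -refl /qpoch_coef.
have qtM : q ^+ 'C(M, 2) * q ^+ 'C(M, 2) * q ^+ r.+1 ^+ M * q ^+ j.+1 ^+ M
           = q ^+ (t * M).
  rewrite -!exprM -!exprD -e_t -e_m; congr (_ ^+ _).
  by have := bin2_double M; lia.
by rewrite -qtM -[in RHS](signrMK M (qbinom q (m + n - t) M)); ring.
Qed.

End PrimitiveRoot.

Theorem lemma2p5 (F : fieldType) (n : nat) (q : F) (k l t : nat) :
  n.-primitive_root q -> (k < n)%N -> (l < n)%N -> (t < n)%N ->
  [/\
   (* (i) *)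
   ((n <= t + l)%N ->
    forall m : nat, (m < t)%N ->
      \sum_(0 <= s < m.+1)
        (-1) ^+ s * q ^ ((s * s.+1)./2%:Z - (s * m)%:Z)
          * qbinom q t (m - s) * qbinom q s (t + l - n)
      = (-1) ^+ m * q ^ (- ((m * m.-1)./2)%:Z - t%:Z * (t%:Z + l%:Z - m%:Z))
          * qbinom q (m + n - t) l),
   (* (ii) *)
   ((l <= k)%N ->
    \sum_(0 <= s < l.+1)
      (-1) ^+ s * q ^ ((s * s.+1)./2%:Z - s%:Z * (l%:Z - k%:Z))
        * qbinom q (n + l - k) s
    = qbinom q k l) &
   (* (iii) *)
   ((l <= k)%N ->
    forall m : nat, (l <= m)%N -> (m < n)%N ->
      \sum_(0 <= s < m.+1)
        (-1) ^+ s * q ^ ((s * s.+1)./2%:Z - s%:Z * (l%:Z - k%:Z))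
          * qbinom q (n + m - k) s * qbinom q (n + m - s) (n + l - s)
      = qbinom q k l)].
Proof.
move=> prim lt_kn lt_ln lt_tn; split=> [le_ntl m lt_mt | le_lk | le_lk m].
- exact: qbinom_identity_i.
- rewrite -(qbinom_identity_iii prim lt_kn le_lk (leqnn l) (leq_ltn_trans le_lk lt_kn)).
  by apply: eq_bigr => s _; rewrite qbinomn mulr1.
- exact: qbinom_identity_iii.
Qed.
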